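(* If $G$ is a countably infinite connected HE-homogeneous graph, then $G$ is MB-homogeneous.
   Context: All graphs are undirected and loopless; subgraphs are induced. A homomorphism maps adjacent vertices to adjacent vertices; a monomorphism is an injective homomorphism; a bimorphism of $G$ is a bijective endomorphism $G\to G$. $G$ is HE-homogeneous if every homomorphism between finite induced subgraphs of $G$ is the restriction of a surjective endomorphism of $G$; $G$ is MB-homogeneous if every monomorphism between finite induced subgraphs of $G$ is the restriction of a bimorphism of $G$. *)

From Stdlib Require Import List Relations.
Set Implicit Arguments.

Section Graphs.
Variable V : Type.
Variable E : V -> V -> Prop.

Definition simple_graph : Prop :=
  (forall x y, E x y -> E y x) /\ (forall x, ~ E x x).

Definition countably_infinite : Prop :=
  exists h : nat -> V,
    (forall n m, h n = h m -> n = m) /\ (forall v, exists n, h n = v).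

Definition connected : Prop :=
  forall x y, clos_refl_trans V E x y.

Definition finite_set (A : V -> Prop) : Prop :=
  exists l : list V, forall x, A x <-> In x l.

(* f (restricted to A) is a homomorphism from G[A] to G[B] *)
Definition hom_on (A B : V -> Prop) (f : V -> V) : Prop :=
  (forall x, A x -> B (f x)) /\
  (forall x y, A x -> A y -> E x y -> E (f x) (f y)).

Definition mono_on (A B : V -> Prop) (f : V -> V) : Prop :=
  hom_on A B f /\ (forall x y, A x -> A y -> f x = f y -> x = y).

Definition endomorphism (g : V -> V) : Prop :=
  forall x y, E x y -> E (g x) (g y).

Definition surjective_map (g : V -> V) : Prop := forall y, exists x, g x = y.
Definition injective_map (g : V -> V) : Prop := forall x y, g x = g y -> x = y.

Definition bimorphism (g : V -> V) : Prop :=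
  endomorphism g /\ injective_map g /\ surjective_map g.

Definition HE_homogeneous : Prop :=
  forall (A B : V -> Prop) (f : V -> V),
    finite_set A -> finite_set B -> hom_on A B f ->
    exists g, endomorphism g /\ surjective_map g /\ (forall x, A x -> g x = f x).

Definition MB_homogeneous : Prop :=
  forall (A B : V -> Prop) (f : V -> V),
    finite_set A -> finite_set B -> mono_on A B f ->
    exists g, bimorphism g /\ (forall x, A x -> g x = f x).
End Graphs.

(* Back and forth between finite partial monomorphisms.  By HE-homogeneity a
   finite partial monomorphism phi extends to a surjective endomorphism g.
   Back: a g-preimage x of a new target w can be added with phi x := w.
   Forth: a new vertex v must be sent to a vertex adjacent to the neighbours of
   g v in the image of phi, but outside that image.  Such a vertex exists
   because every vertex has infinite degree, and because extending the map
   that sends a neighbour d of k onto k and fixes other neighbours Z of k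
   yields a common neighbour of k and Z.  Infinite degree holds since, in a
   connected HE-homogeneous graph, a finite neighbourhood of s would force the
   whole graph to be the closed neighbourhood of s. *)

From Stdlib Require Import List Relations.
From Stdlib Require Import Classical ClassicalEpsilon FinFun Lia.

Definition filterP {T : Type} (P : T -> Prop) (l : list T) : list T :=
  filter (fun x => if excluded_middle_informative (P x) then true else false) l.

Lemma in_filterP {T : Type} (P : T -> Prop) (l : list T) (x : T) :
  In x (filterP P l) <-> In x l /\ P x.
Proof.
  unfold filterP; rewrite filter_In.
  destruct (excluded_middle_informative (P x)); intuition discriminate.
Qed.

Definition update {T U : Type} (f : T -> U) (a : T) (b : U) : T -> U :=
  fun x => if excluded_middle_informative (x = a) then b else f x.

Lemma update_eq {T U : Type} (f : T -> U) (a : T) (b : U) : update f a b a = b.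
Proof. unfold update; destruct (excluded_middle_informative (a = a)); congruence. Qed.

Lemma update_neq {T U : Type} (f : T -> U) (a : T) (b : U) (x : T) :
  x <> a -> update f a b x = f x.
Proof. unfold update; destruct (excluded_middle_informative (x = a)); congruence. Qed.

Lemma countably_infinite_not_list {V : Type} :
  countably_infinite V -> forall l : list V, exists v, ~ In v l.
Proof.
  intros [h [Hinj _]] l.
  apply not_all_ex_not; intro Hall.
  assert (Hincl : incl (map h (seq 0 (S (length l)))) l) by (intros x _; apply Hall).
  apply NoDup_incl_length in Hincl.
  - rewrite length_map, length_seq in Hincl; lia.
  - apply Injective_map_NoDup; [exact Hinj | apply seq_NoDup].
Qed.

Lemma dependent_choice_nat {T : Type} (P : T -> Prop) (R : nat -> T -> T -> Prop) (s0 : T) :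
  P s0 -> (forall n s, P s -> exists s', P s' /\ R n s s') ->
  exists c : nat -> T, c 0 = s0 /\ forall n, P (c n) /\ R n (c n) (c (S n)).
Proof.
  intros H0 Hstep.
  set (next n s := epsilon (inhabits s0) (fun s' => P s' /\ R n s s')).
  assert (Hnext : forall n s, P s -> P (next n s) /\ R n s (next n s))
    by (intros n s Hs; apply epsilon_spec, Hstep, Hs).
  set (c := fix c n := match n with 0 => s0 | S m => next m (c m) end).
  assert (Hc : forall n, P (c n)) by (induction n; [exact H0 | apply Hnext, IHn]).
  exists c; split; [reflexivity | intro n; split; [apply Hc | apply Hnext, Hc]].
Qed.

Section Graph.

Variables (V : Type) (E : V -> V -> Prop).
Hypothesis E_sym : forall x y, E x y -> E y x.
Hypothesis E_irrefl : forall x, ~ E x x.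

Definition partial_mono (D : list V) (phi : V -> V) : Prop :=
  (forall a b, In a D -> In b D -> E a b -> E (phi a) (phi b)) /\
  (forall a b, In a D -> In b D -> phi a = phi b -> a = b).

Definition extends (D : list V) (phi : V -> V) (D' : list V) (phi' : V -> V) : Prop :=
  forall a, In a D -> In a D' /\ phi' a = phi a.

Lemma partial_mono_cons_mem (D : list V) (phi : V -> V) (v : V) :
  In v D -> partial_mono D phi -> partial_mono (v :: D) phi.
Proof.
  intros Hv [Hhom Hinj].
  assert (Hsub : forall a, In a (v :: D) -> In a D) by (intros a [<- | Ha]; auto).
  split; intros a b Ha Hb; [apply Hhom | apply Hinj]; auto.
Qed.

Lemma partial_mono_update (D : list V) (phi : V -> V) (x y : V) :
  partial_mono D phi -> ~ In x D -> ~ In y (map phi D) ->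
  (forall b, In b D -> E x b -> E y (phi b)) ->
  partial_mono (x :: D) (update phi x y).
Proof.
  intros [Hhom Hinj] Hx Hy Hadj.
  assert (Hold : forall a, In a D -> update phi x y a = phi a)
    by (intros a Ha; apply update_neq; intros ->; contradiction).
  split.
  - intros a b [<- | Ha] [<- | Hb] Hab.
    + destruct (E_irrefl _ Hab).
    + rewrite update_eq, Hold by exact Hb; auto.
    + rewrite update_eq, Hold by exact Ha; auto.
    + rewrite !Hold by assumption; auto.
  - intros a b [<- | Ha] [<- | Hb] Hab; auto.
    + rewrite update_eq, Hold in Hab by exact Hb.
      destruct Hy; rewrite Hab; apply in_map; exact Hb.
    + rewrite update_eq, Hold in Hab by exact Ha.
      destruct Hy; rewrite <- Hab; apply in_map; exact Ha.
    + rewrite !Hold in Hab by assumption; auto.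
Qed.

Section ChainUnion.

Variables (Ds : nat -> list V) (phis : nat -> V -> V).
Hypothesis chain_mono : forall n, partial_mono (Ds n) (phis n).
Hypothesis chain_step : forall n, extends (Ds n) (phis n) (Ds (S n)) (phis (S n)).
Hypothesis chain_dom : forall v, exists n, In v (Ds n).
Hypothesis chain_ran : forall w, exists n a, In a (Ds n) /\ phis n a = w.

Lemma chain_extends (n m : nat) : n <= m -> extends (Ds n) (phis n) (Ds m) (phis m).
Proof.
  induction 1 as [| m _ IH]; intros a Ha.
  - split; auto.
  - destruct (IH a Ha) as [Ham Hphi].
    destruct (chain_step m a Ham) as [HaS HphiS].
    split; [exact HaS | congruence].
Qed.

Lemma chain_common_stage (x y : V) : exists m, In x (Ds m) /\ In y (Ds m).
Proof.
  destruct (chain_dom x) as [i Hx], (chain_dom y) as [j Hy].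
  exists (Nat.max i j); split.
  - apply (chain_extends i); [lia | exact Hx].
  - apply (chain_extends j); [lia | exact Hy].
Qed.

Lemma chain_union_bimorphism :
  exists g, bimorphism E g /\ forall n a, In a (Ds n) -> g a = phis n a.
Proof.
  destruct (choice (fun v n => In v (Ds n)) chain_dom) as [stage Hstage].
  set (g v := phis (stage v) v).
  assert (Hg : forall n a, In a (Ds n) -> g a = phis n a).
  { intros n a Ha.
    destruct (chain_extends n (Nat.max n (stage a)) ltac:(lia) a Ha) as [_ Hn].
    destruct (chain_extends (stage a) (Nat.max n (stage a)) ltac:(lia) a (Hstage a))
      as [_ Hs].
    unfold g; congruence. }
  exists g; split; [split; [| split] | exact Hg].
  - intros x y Hxy; destruct (chain_common_stage x y) as [m [Hx Hy]].
    rewrite (Hg m x Hx), (Hg m y Hy); apply (proj1 (chain_mono m)); auto.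
  - intros x y Hxy; destruct (chain_common_stage x y) as [m [Hx Hy]].
    rewrite (Hg m x Hx), (Hg m y Hy) in Hxy; apply (proj2 (chain_mono m)); auto.
  - intro w; destruct (chain_ran w) as [n [a [Ha Hw]]].
    exists a; rewrite (Hg n a Ha); exact Hw.
Qed.

End ChainUnion.

Hypothesis HE : HE_homogeneous E.

Lemma partial_hom_extends (D : list V) (phi : V -> V) :
  (forall a b, In a D -> In b D -> E a b -> E (phi a) (phi b)) ->
  exists g, endomorphism E g /\ surjective_map g /\ forall a, In a D -> g a = phi a.
Proof.
  intro Hhom.
  apply (HE (fun x => In x D) (fun y => In y (map phi D)) phi).
  - exists D; tauto.
  - exists (map phi D); tauto.
  - split; [intros x Hx; apply in_map; exact Hx | exact Hhom].
Qed.

Lemma common_neighbour (k d : V) (Z : list V) :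
  (forall z, In z Z -> E k z) -> E k d -> ~ In d Z ->
  exists c, E c k /\ forall z, In z Z -> E c z.
Proof.
  intros HZ Hkd Hd.
  assert (Hfix : forall z, In z Z -> update id d k z = z)
    by (intros z Hz; apply update_neq; intros ->; contradiction).
  destruct (partial_hom_extends (d :: Z) (update id d k)) as [g [Hg [_ Hgphi]]].
  - intros a b [<- | Ha] [<- | Hb] Hab.
    + destruct (E_irrefl _ Hab).
    + rewrite update_eq, Hfix by exact Hb; auto.
    + rewrite update_eq, Hfix by exact Ha; auto.
    + rewrite !Hfix by assumption; exact Hab.
  - exists (g k); split.
    + pose proof (Hg k d Hkd) as Hgk.
      rewrite (Hgphi d), update_eq in Hgk by (left; reflexivity); exact Hgk.
    + intros z Hz; pose proof (Hg k z (HZ z Hz)) as Hgz.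
      rewrite (Hgphi z), Hfix in Hgz by (simpl; auto); exact Hgz.
Qed.

Hypothesis E_connected : connected E.

Section FiniteNeighbourhood.

Variables (s : V) (l : list V).
Hypothesis nbhd_in : forall d, E s d -> In d l.

Lemma finite_nbhd_clique (d d' : V) : E s d -> E s d' -> d <> d' -> E d d'.
Proof.
  intros Hd Hd' Hne.
  destruct (common_neighbour s d (filterP (fun x => E s x /\ x <> d) l))
    as [c [Hcs Hcz]].
  - intros z Hz; apply in_filterP in Hz; tauto.
  - exact Hd.
  - intros Hz; apply in_filterP in Hz; tauto.
  - assert (Hc : E s c) by auto.
    destruct (classic (c = d)) as [-> | Hcd].
    + apply Hcz, in_filterP; auto.
    + destruct (E_irrefl c); apply Hcz, in_filterP; auto.
Qed.

Lemma finite_nbhd_closed (p q : V) : E s p -> E p q -> q = s \/ E s q.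
Proof.
  intros Hp Hq; apply NNPP; intro Hout.
  destruct (common_neighbour p q (filterP (fun x => x = s \/ (E s x /\ x <> p)) (s :: l)))
    as [c [Hcp Hcz]].
  - intros z Hz; apply in_filterP in Hz as [_ [-> | [Hsz Hzp]]]; auto.
    apply finite_nbhd_clique; auto.
  - exact Hq.
  - intros Hz; apply in_filterP in Hz; tauto.
  - assert (Hsc : E s c) by (apply E_sym, Hcz, in_filterP; split; left; reflexivity).
    destruct (classic (c = p)) as [-> | Hcp'].
    + exact (E_irrefl _ Hcp).
    + destruct (E_irrefl c); apply Hcz, in_filterP; split; [right |]; auto.
Qed.

Lemma finite_nbhd_ball (y : V) : y = s \/ E s y.
Proof.
  induction (clos_rt_rtn1 _ _ _ _ (E_connected s y)) as [| y z Hyz _ IH]; auto.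
  destruct IH as [<- | Hy]; [right; exact Hyz | exact (finite_nbhd_closed y z Hy Hyz)].
Qed.

End FiniteNeighbourhood.

Hypothesis V_infinite : countably_infinite V.

Lemma infinite_degree (s : V) (l : list V) : exists d, E s d /\ ~ In d l.
Proof.
  apply NNPP; intro Hfin.
  assert (Hnbhd : forall d, E s d -> In d l)
    by (intros d Hd; apply NNPP; intro; apply Hfin; eauto).
  destruct (countably_infinite_not_list V_infinite (s :: l)) as [v Hv].
  apply Hv; destruct (finite_nbhd_ball s l Hnbhd v) as [-> | Hsv]; [left | right]; auto.
Qed.

Lemma fresh_common_neighbour (k : V) (X F : list V) :
  (forall x, In x X -> E k x) -> exists c, (forall x, In x X -> E c x) /\ ~ In c F.
Proof.
  intro HX.
  (* the vertices of F adjacent to k go into Z, so c, being adjacent to k, avoids F *)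
  set (Z := X ++ filterP (E k) F).
  assert (HZ : forall z, In z Z -> E k z).
  { intros z Hz; apply in_app_or in Hz as [Hz | Hz]; [auto | apply in_filterP in Hz; tauto]. }
  destruct (infinite_degree k Z) as [d [Hkd Hd]].
  destruct (common_neighbour k d Z HZ Hkd Hd) as [c [Hck Hcz]].
  exists c; split.
  - intros x Hx; apply Hcz, in_or_app; left; exact Hx.
  - intro HcF; apply (E_irrefl c), Hcz, in_or_app; right; apply in_filterP; auto.
Qed.

Lemma forth (D : list V) (phi : V -> V) (v : V) :
  partial_mono D phi ->
  exists phi', partial_mono (v :: D) phi' /\ forall a, In a D -> phi' a = phi a.
Proof.
  intro Hphi.
  destruct (classic (In v D)) as [Hv | Hv].
  { exists phi; split; [apply partial_mono_cons_mem | ]; auto. }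
  destruct (partial_hom_extends D phi (proj1 Hphi)) as [g [Hg [_ Hgphi]]].
  destruct (fresh_common_neighbour (g v) (filterP (E (g v)) (map phi D)) (map phi D))
    as [c [Hc Hfresh]].
  { intros x Hx; apply in_filterP in Hx; tauto. }
  exists (update phi v c); split.
  - apply partial_mono_update; auto.
    intros b Hb Hvb; apply Hc, in_filterP; split; [apply in_map; exact Hb |].
    rewrite <- Hgphi by exact Hb; auto.
  - intros a Ha; apply update_neq; intros ->; contradiction.
Qed.

Lemma back (D : list V) (phi : V -> V) (w : V) :
  partial_mono D phi ->
  exists x phi', partial_mono (x :: D) phi' /\
    (forall a, In a D -> phi' a = phi a) /\ phi' x = w.
Proof.
  intro Hphi.
  destruct (classic (In w (map phi D))) as [Hw | Hw].
  { apply in_map_iff in Hw as [a [Hw Ha]].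
    exists a, phi; split; [apply partial_mono_cons_mem | ]; auto. }
  destruct (partial_hom_extends D phi (proj1 Hphi)) as [g [Hg [Hsurj Hgphi]]].
  destruct (Hsurj w) as [x Hx].
  assert (HxD : ~ In x D).
  { intro HxD; apply Hw; rewrite <- Hx, Hgphi by exact HxD; apply in_map; exact HxD. }
  exists x, (update phi x w); split; [| split].
  - apply partial_mono_update; auto.
    intros b Hb Hxb; rewrite <- Hx, <- (Hgphi b Hb); auto.
  - intros a Ha; apply update_neq; intros ->; contradiction.
  - apply update_eq.
Qed.

Lemma back_and_forth (D : list V) (phi : V -> V) (v : V) :
  partial_mono D phi ->
  exists D' phi', partial_mono D' phi' /\ extends D phi D' phi' /\
    In v D' /\ exists a, In a D' /\ phi' a = v.
Proof.
  intro Hphi.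
  destruct (forth D phi v Hphi) as [phi1 [Hphi1 Hagree1]].
  destruct (back (v :: D) phi1 v Hphi1) as [x [phi2 [Hphi2 [Hagree2 Hx]]]].
  exists (x :: v :: D), phi2; split; [exact Hphi2 | split; [| split]].
  - intros a Ha; split; [right; right; exact Ha |].
    rewrite Hagree2 by (right; exact Ha); auto.
  - right; left; reflexivity.
  - exists x; split; [left; reflexivity | exact Hx].
Qed.

End Graph.

Theorem lemma8p1 (V : Type) (E : V -> V -> Prop) :
  simple_graph E -> countably_infinite V -> connected E ->
  HE_homogeneous E -> MB_homogeneous E.
Proof.
  intros [Hsym Hirr] Hinf Hconn HE A _ f [lA HlA] _ [[_ Hfhom] Hfinj].
  pose proof Hinf as [e [_ He]].
  assert (Hf : partial_mono _ E lA f)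
    by (split; intros a b Ha Hb; apply HlA in Ha, Hb; auto).
  destruct (dependent_choice_nat (fun p => partial_mono _ E (fst p) (snd p))
              (fun n p q => extends _ (fst p) (snd p) (fst q) (snd q) /\ In (e n) (fst q) /\
                            exists a, In a (fst q) /\ snd q a = e n)
              (lA, f) Hf) as [c [Hc0 Hc]].
  { intros n [D phi] Hphi.
    destruct (back_and_forth V E Hsym Hirr HE Hconn Hinf D phi (e n) Hphi)
      as [D' [phi' Hstep]].
    exists (D', phi'); exact Hstep. }
  destruct (chain_union_bimorphism V E (fun n => fst (c n)) (fun n => snd (c n)))
    as [g [Hg Hgc]].
  - intro n; apply Hc.
  - intro n; apply Hc.
  - intro v; destruct (He v) as [n <-]; exists (S n); apply Hc.
  - intro w; destruct (He w) as [n <-]; exists (S n); apply Hc.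
  - exists g; split; [exact Hg |].
    intros a Ha; rewrite (Hgc 0 a); rewrite Hc0; [reflexivity | apply HlA; exact Ha].
Qed.
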